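(* Let ${\mathsf K},{\mathsf N}$ be positive integers, ${\mathsf q}$ a prime power, and $t\in\{0,1,\ldots,{\mathsf K}\}$. For every file length ${\mathsf B}$ that is a multiple of $\binom{{\mathsf K}}{t}$, there exists an uncoded cache placement in which each user stores ${\mathsf M}{\mathsf B}$ symbols with ${\mathsf M}=\frac{{\mathsf N}t}{{\mathsf K}}$, together with, for every demand matrix $\mathbb{D}\in\mathbb{F}_{\mathsf q}^{{\mathsf K}\times{\mathsf N}}$, a delivery (encoding and decoding functions) under which every user $k$ correctly decodes its demanded function and the load is $$\mathsf R(\mathbb{D})=\frac{\binom{{\mathsf K}}{t+1}-\binom{{\mathsf K}-\mathrm{rank}_{\mathsf q}(\mathbb{D})}{t+1}}{\binom{{\mathsf K}}{t}}.$$ In particular the worst-case load of this scheme equals $\frac{\binom{{\mathsf K}}{t+1}-\binom{{\mathsf K}-\min\{{\mathsf K},{\mathsf N}\}}{t+1}}{\binom{{\mathsf K}}{t}}$, attained by demand matrices of rank $\min\{{\mathsf K},{\mathsf N}\}$.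
   Context: Shared-link cache-aided scalar linear function retrieval problem with parameters $({\mathsf K},{\mathsf N},{\mathsf M},{\mathsf q})$: a server holds ${\mathsf N}$ files $F_1,\ldots,F_{\mathsf N}$, each a vector of ${\mathsf B}$ independent uniformly distributed symbols of $\mathbb{F}_{\mathsf q}$, and is connected to ${\mathsf K}$ users by an error-free broadcast link. Placement phase: user $k$ stores $Z_k=\phi_k(F_1,\ldots,F_{\mathsf N})\in\mathbb{F}_{\mathsf q}^{{\mathsf B}{\mathsf M}}$, chosen without knowledge of demands. Delivery phase: user $k$ demands the row vector $\mathbf y_k=(y_{k,1},\ldots,y_{k,{\mathsf N}})\in\mathbb{F}_{\mathsf q}^{\mathsf N}$, i.e. wants $y_{k,1}F_1+\cdots+y_{k,{\mathsf N}}F_{\mathsf N}$; the demand matrix is $\mathbb{D}=[\mathbf y_1;\ldots;\mathbf y_{\mathsf K}]\in\mathbb{F}_{\mathsf q}^{{\mathsf K}\times{\mathsf N}}$. The server broadcasts $X=\psi(\mathbb{D},F_1,\ldots,F_{\mathsf N})\in\mathbb{F}_{\mathsf q}^{{\mathsf B}{\mathsf R}}$, and each user $k$ must compute $y_{k,1}F_1+\cdots+y_{k,{\mathsf N}}F_{\mathsf N}=\xi_k(\mathbb{D},Z_k,X)$ for all file realizations. ${\mathsf R}$ is the load (transmitted symbols divided by ${\mathsf B}$). A placement is uncoded if each $Z_k$ consists of a subset of the symbols of the files, copied directly. The worst-case load of a scheme is the maximum load over all demand matrices. $\binom{x}{y}=0$ if $x<y$ or $x<0$ or $y<0$. $\mathrm{rank}_{\mathsf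 q}$ denotes rank over $\mathbb{F}_{\mathsf q}$. *)

From HB Require Import structures.
From mathcomp Require Import all_boot all_order all_algebra.
Set Implicit Arguments. Unset Strict Implicit. Unset Printing Implicit Defensive.
Import GRing.Theory.

(* File library: W : 'M[F]_(N, B), row n is the file F_{n+1} (B symbols).
   A symbol position is a pair (file index, symbol index). *)

(* Uncoded cache content of a user storing the symbol positions in S:
   the values of the stored symbols (positions outside S are masked by 0;
   since S is fixed by the placement, this carries exactly the info Z_k). *)
Definition cache (F : finFieldType) (N B : nat) (S : {set 'I_N * 'I_B})
  (W : 'M[F]_(N, B)) : {ffun 'I_N * 'I_B -> F} :=
  [ffun p => if p \in S then W p.1 p.2 else 0%R].

Definition delivery (F : finFieldType) (K N B : nat)
  (S : 'I_K -> {set 'I_N * 'I_B}) (D : 'M[F]_(K, N)) (L : nat) : Prop :=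
  exists (enc : 'M[F]_(N, B) -> 'rV[F]_L)
         (dec : 'I_K -> {ffun 'I_N * 'I_B -> F} -> 'rV[F]_L -> 'rV[F]_B),
    forall (W : 'M[F]_(N, B)) (k : 'I_K),
      dec k (cache (S k) W) (enc W) = (row k D *m W)%R.

From HB Require Import structures.
From mathcomp Require Import all_boot all_order all_algebra.
From mathcomp Require Import ring zify.
Set Implicit Arguments. Unset Strict Implicit. Unset Printing Implicit Defensive.
Import GRing.Theory.

(* Split every file into C(K,t) subfiles W_T of m = B / C(K,t) symbols, one for
   each t-subset T of users, and let user k cache the W_T with k in T.  For a
   (t+1)-subset S put
     X_S = \sum_(k in S) (-1)^#{i in S | i < k} y_k W_(S \ k).
   A user k outside T recovers y_k W_T from X_(k |: T) and its cache, so it is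
   enough to broadcast data of which every X_S is a fixed linear combination.
   Add the users one at a time, keeping the messages of the sets of users seen
   so far.  If the demand y_n of the new user is independent of y_0..y_(n-1),
   send the C(n,s) new messages X_(n |: P) outright.  If y_n = \sum_(i<n) c_i y_i,
   the alternating signs make X_(n |: P) a combination of the X_(j |: P), j < n,
   plus the message X_P of a modified family of subfiles, which costs no more
   than the messages of the s-subsets.  By Pascal's rule the total number of
   symbols sent is (C(K,t+1) - C(K-r,t+1)) m with r = rank D. *)

Lemma setU1D1 (T : finType) (j k : T) (P : {set T}) :
  j != k -> (j |: P) :\ k = j |: (P :\ k).
Proof.
move=> jk; apply/setP => i; rewrite !inE.
by case: (eqVneq i j) => [->|] //=; rewrite jk.
Qed.

Definition ksubsets (T : finType) (A : {set T}) (s : nat) : {set {set T}} :=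
  [set S : {set T} | S \subset A & #|S| == s].

Section KSubsets.
Variables (T : finType) (A : {set T}) (s : nat).

Lemma card_ksubsets : #|ksubsets A s| = 'C(#|A|, s).
Proof. exact: cards_draws. Qed.

Lemma ksubsetsU1 a (P : {set T}) :
  a \in A -> a \notin P -> P \in ksubsets A s -> a |: P \in ksubsets A s.+1.
Proof.
move=> aA aP; rewrite !inE => /andP[PA /eqP <-].
by rewrite subUset sub1set aA PA cardsU1 aP add1n eqxx.
Qed.

Lemma ksubsets_setU1 a (S : {set T}) : a \notin A -> S \in ksubsets (a |: A) s.+1 ->
  if a \in S then S :\ a \in ksubsets A s else S \in ksubsets A s.+1.
Proof.
move=> aA; rewrite !inE => /andP[SaA /eqP cardS]; case: ifP => aS.
  rewrite -(setU1K aA) setSD // /=.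
  by move: cardS; rewrite (cardsD1 a) aS add1n => -[->].
rewrite cardS eqxx andbT; apply/subsetP => x xS; have := subsetP SaA x xS.
by rewrite !inE => /orP[/eqP xa|//]; move: aS; rewrite -xa xS.
Qed.

End KSubsets.

Definition lower (K n : nat) : {set 'I_K} := [set i : 'I_K | (i < n)%N].
Arguments lower {K} n.

Section Lower.
Variable K : nat.

Lemma lower0 : lower 0 = set0 :> {set 'I_K}.
Proof. by apply/setP => i; rewrite !inE. Qed.

Lemma notin_lower (k : 'I_K) : k \notin lower k.
Proof. by rewrite inE ltnn. Qed.

Lemma lowerS n (hn : n < K) : lower n.+1 = Ordinal hn |: lower n.
Proof. by apply/setP => i; rewrite !inE ltnS leq_eqVlt. Qed.

Lemma card_lower n : n <= K -> #|lower n : {set 'I_K}| = n.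
Proof.
elim: n => [|n IHn] hn; first by rewrite lower0 cards0.
by rewrite (lowerS hn) cardsU1 notin_lower IHn // ltnW.
Qed.

End Lower.

Section SignedMessages.
Variables (R : comNzRingType) (K N m : nat) (D : 'M[R]_(K, N)).
Local Open Scope ring_scope.

Definition nbelow (k : 'I_K) (S : {set 'I_K}) : nat := #|S :&: lower k|.

Definition coded_msg (W : {set 'I_K} -> 'M[R]_(N, m)) (S : {set 'I_K}) : 'rV[R]_m :=
  \sum_(k in S) (-1) ^+ nbelow k S *: (row k D *m W (S :\ k)).

Lemma signrK n : (-1) ^+ n * (-1) ^+ n = 1 :> R.
Proof. by rewrite -expr2 sqrr_sign. Qed.

Lemma nbelow_setU1 (j k : 'I_K) (P : {set 'I_K}) :
  j \notin P -> nbelow k (j |: P) = (nbelow k P + (j < k))%N.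
Proof.
move=> jP; rewrite /nbelow setIUl; case: (ltnP j k) => jk.
  have jPk : j \notin P :&: lower k by rewrite inE (negPf jP).
  by rewrite (setIidPl _) ?sub1set ?inE // cardsU1 jPk addn1.
have -> : [set j] :&: lower k = set0.
  by apply/setP => i; rewrite !inE; case: eqP => // ->; rewrite ltnNge jk.
by rewrite set0U addn0.
Qed.

Lemma nbelow_lower (k : 'I_K) (P : {set 'I_K}) :
  P \subset lower k -> nbelow k P = #|P|.
Proof. by move/setIidPl; rewrite /nbelow => ->. Qed.

Lemma coded_msg_setU1 W (j : 'I_K) (P : {set 'I_K}) : j \notin P ->
  coded_msg W (j |: P) = (-1) ^+ nbelow j P *: (row j D *m W P) +
     \sum_(k in P) (-1) ^+ nbelow k (j |: P) *: (row k D *m W (j |: (P :\ k))).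
Proof.
move=> jP; rewrite /coded_msg big_setU1 //= setU1K // nbelow_setU1 // ltnn addn0.
congr (_ + _); apply: eq_bigr => k kP.
by rewrite setU1D1 //; apply: contraNneq jP => ->.
Qed.

(* Exactly one of [j < k], [k < j] holds, so the two orders of removing j and k
   from [j |: P] pick up opposite signs. *)
Lemma nbelow_sign_swap (j k : 'I_K) (P : {set 'I_K}) : j \notin P -> k \in P ->
  (-1) ^+ nbelow j P * (-1) ^+ nbelow k (j |: P)
    = - ((-1) ^+ nbelow k P * (-1) ^+ nbelow j (P :\ k)) :> R.
Proof.
move=> jP kP; have jk : j != k by apply: contraNneq jP => ->.
rewrite nbelow_setU1 // -{1}(setD1K kP) nbelow_setU1 ?setD11 // !exprD.
have : ((k < j) + (j < k) = 1)%N.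
  by case: (ltngtP k j) => // /val_inj/eqP; rewrite eq_sym (negPf jk).
move/(congr1 (fun e => (-1) ^+ e : R)); rewrite exprD expr1 => e.
transitivity ((-1) ^+ (k < j) * (-1) ^+ (j < k) *
  ((-1) ^+ nbelow k P * (-1) ^+ nbelow j (P :\ k)) : R); first by ring.
by rewrite e mulN1r.
Qed.

Section DependentRow.
Variables (k0 : 'I_K) (c : 'I_K -> R).
Hypothesis row_k0 : row k0 D = \sum_i c i *: row i D.

(* The subfile family on which the message of P carries exactly what the
   messages of the sets j |: P miss from the message of k0 |: P. *)
Definition dep_family (W : {set 'I_K} -> 'M[R]_(N, m)) (P : {set 'I_K}) : 'M[R]_(N, m) :=
  W (k0 |: P) + (-1) ^+ #|P|.+1 *:
    \sum_(j | j \notin P) ((-1) ^+ nbelow j P * c j) *: W (j |: P).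

Lemma coded_msg_lincomb W (P : {set 'I_K}) :
  row k0 D *m W P =
    \sum_(j | j \notin P) ((-1) ^+ nbelow j P * c j) *: coded_msg W (j |: P) +
    \sum_(k in P) (-1) ^+ nbelow k P *: (row k D *m
       \sum_(j | j \notin P :\ k) ((-1) ^+ nbelow j (P :\ k) * c j) *: W (j |: P :\ k)).
Proof.
pose T k S := row k D *m W S.
have outside : \sum_(j | j \notin P) ((-1) ^+ nbelow j P * c j) *: coded_msg W (j |: P) =
    \sum_(j | j \notin P) c j *: T j P +
    \sum_(j | j \notin P) \sum_(k in P)
      ((-1) ^+ nbelow j P * c j * (-1) ^+ nbelow k (j |: P)) *: T k (j |: (P :\ k)).
  rewrite -big_split /=; apply: eq_bigr => j jP.
  rewrite coded_msg_setU1 // scalerDr scalerA mulrAC signrK mul1r scaler_sumr.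
  by congr (_ + _); apply: eq_bigr => k kP; rewrite scalerA.
have inside : \sum_(k in P) (-1) ^+ nbelow k P *: (row k D *m
       \sum_(j | j \notin P :\ k) ((-1) ^+ nbelow j (P :\ k) * c j) *: W (j |: P :\ k)) =
    \sum_(k in P) c k *: T k P +
    \sum_(k in P) \sum_(j | j \notin P)
      ((-1) ^+ nbelow k P * (-1) ^+ nbelow j (P :\ k) * c j) *: T k (j |: (P :\ k)).
  rewrite -big_split /=; apply: eq_bigr => k kP.
  rewrite mulmx_sumr scaler_sumr (bigD1 k) /=; last by rewrite !inE eqxx.
  congr (_ + _).
    rewrite -scalemxAr scalerA setD1K // mulrA.
    have -> : nbelow k (P :\ k) = nbelow k P.
      by rewrite -{2}(setD1K kP) nbelow_setU1 ?setD11 // ltnn addn0.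
    by rewrite signrK mul1r.
  apply: eq_big => [j|j _]; last by rewrite -scalemxAr scalerA mulrA.
  by rewrite !inE; case: (eqVneq j k) => [->|] /=; rewrite ?kP ?andbT.
have cross : \sum_(j | j \notin P) \sum_(k in P)
      ((-1) ^+ nbelow j P * c j * (-1) ^+ nbelow k (j |: P)) *: T k (j |: (P :\ k)) +
    \sum_(k in P) \sum_(j | j \notin P)
      ((-1) ^+ nbelow k P * (-1) ^+ nbelow j (P :\ k) * c j) *: T k (j |: (P :\ k)) = 0.
  rewrite exchange_big -big_split /= big1 // => k kP.
  rewrite -big_split /= big1 // => j jP.
  by rewrite -scalerDl mulrAC nbelow_sign_swap // mulNr addNr scale0r.
rewrite outside inside addrACA cross addr0 row_k0 mulmx_suml.
rewrite (bigID (fun i => i \in P)) addrC /=.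
by congr (_ + _); apply: eq_bigr => i _; rewrite /T scalemxAl.
Qed.

Lemma coded_msg_dep W (P : {set 'I_K}) : P \subset lower k0 ->
  coded_msg W (k0 |: P) = (-1) ^+ #|P| *:
      \sum_(j | j \notin P) ((-1) ^+ nbelow j P * c j) *: coded_msg W (j |: P)
    + coded_msg (dep_family W) P.
Proof.
move=> Plow; have k0P : k0 \notin P.
  by apply: contraTN Plow => k0P; apply/subsetPn; exists k0; rewrite // inE ltnn.
rewrite coded_msg_setU1 // nbelow_lower // coded_msg_lincomb scalerDr -addrA.
congr (_ + _); rewrite addrC /coded_msg scaler_sumr -big_split /=; apply: eq_bigr => k kP.
have kk0 : (k0 < k)%N = false.
  by apply/negbTE; rewrite -leqNgt ltnW //; have := subsetP Plow k kP; rewrite inE.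
have cardPk : #|P :\ k|.+1 = #|P| by rewrite [#|P|](cardsD1 k) kP.
rewrite nbelow_setU1 // kk0 addn0 /dep_family cardPk mulmxDr scalerDr; congr (_ + _).
by rewrite -scalemxAr !scalerA mulrC.
Qed.

End DependentRow.
End SignedMessages.

Section PrefixRank.
Variables (F : fieldType) (K N : nat) (D : 'M[F]_(K, N)).
Local Open Scope ring_scope.

Lemma mxrank_adds_row p n (A : 'M[F]_(p, n)) (y : 'rV_n) :
  \rank (A + y)%MS = (\rank A + ~~ (y <= A)%MS)%N.
Proof.
have [yA|yNA] := boolP (y <= A)%MS; first by rewrite addn0 (addsmx_idPl yA).
have grow : (\rank A < \rank (A + y))%N.
  by rewrite (ltn_leqif (mxrank_leqif_sup (addsmxSl A y))) addsmx_sub submx_refl.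
have bound : (\rank (A + y) <= \rank A + 1)%N.
  apply: leq_trans (leq_of_leqif (mxrank_adds_leqif A y)) _.
  by rewrite leq_add2l rank_leq_row.
by apply/eqP; rewrite eqn_leq bound addn1 grow.
Qed.

Definition prefix_mx n : 'M[F]_(K, N) := \matrix_(i, j) if (i < n)%N then D i j else 0.

Lemma row_prefix_mx n i : row i (prefix_mx n) = if (i < n)%N then row i D else 0.
Proof. by apply/rowP => j; rewrite !mxE; case: ifP; rewrite ?mxE. Qed.

Lemma prefix_mx0 : prefix_mx 0 = 0.
Proof. by apply/matrixP => i j; rewrite !mxE. Qed.

Lemma prefix_mxK : prefix_mx K = D.
Proof. by apply/matrixP => i j; rewrite mxE ltn_ord. Qed.

Lemma prefix_mxS n (hn : (n < K)%N) :
  (prefix_mx n.+1 == prefix_mx n + row (Ordinal hn) D)%MS.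
Proof.
have row_sub (i : 'I_K) : (i < n.+1)%N -> (row i D <= prefix_mx n.+1)%MS.
  by move=> lti; apply: (eq_row_sub i); rewrite row_prefix_mx lti.
apply/andP; split.
  apply/row_subP => i; rewrite row_prefix_mx ltnS leq_eqVlt.
  case: (eqVneq (i : nat) n) => [ein|_] /=.
    by rewrite (_ : i = Ordinal hn) ?addsmxSr //; apply: val_inj.
  case: ifP => lti; last exact: sub0mx.
  by apply: submx_trans (addsmxSl _ _); apply: (eq_row_sub i); rewrite row_prefix_mx lti.
rewrite addsmx_sub row_sub ?andbT //; apply/row_subP => i.
rewrite row_prefix_mx; case: ifP => [lti|_]; last exact: sub0mx.
exact/row_sub/ltnW.
Qed.

Lemma mxrank_prefixS n (hn : (n < K)%N) :
  \rank (prefix_mx n.+1) = (\rank (prefix_mx n) + ~~ (row (Ordinal hn) D <= prefix_mx n)%MS)%N.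
Proof. by rewrite -mxrank_adds_row; apply/eqmx_rank/prefix_mxS. Qed.

Lemma mxrank_prefix_le n : (n <= K)%N -> (\rank (prefix_mx n) <= n)%N.
Proof.
elim: n => [|n IHn] hn; first by rewrite prefix_mx0 mxrank0.
rewrite (mxrank_prefixS hn) -[n.+1]addn1 leq_add ?leq_b1 //.
exact/IHn/ltnW.
Qed.

End PrefixRank.

Definition nload (n r s : nat) : nat := 'C(n, s) - 'C(n - r, s).

Lemma nloadS_dep n r s : r <= n -> nload n r s.+1 + nload n r s = nload n.+1 r s.+1.
Proof.
move=> rn; rewrite /nload subSn // !binS.
have := leq_bin2l s.+1 (leq_subr r n); have := leq_bin2l s (leq_subr r n); lia.
Qed.

Lemma nloadS_indep n r s : r <= n -> nload n r s.+1 + 'C(n, s) = nload n.+1 r.+1 s.+1.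
Proof.
move=> rn; rewrite /nload subSS binS.
have := leq_bin2l s.+1 (leq_subr r n); lia.
Qed.

Lemma leq_nload n r1 r2 s : r1 <= r2 -> nload n r1 s <= nload n r2 s.
Proof. by move=> r12; rewrite leq_sub2l // leq_bin2l // leq_sub2l. Qed.

Section Encoding.
Variables (F : fieldType) (K N m : nat) (D : 'M[F]_(K, N)).
Local Open Scope ring_scope.

Lemma enum_row_select (T : finType) (A : {set T}) (f : T -> 'rV[F]_m) x : x \in A ->
  \row_(i < #|A|) (enum_val i == x)%:R *m \matrix_(i < #|A|) f (enum_val i) = f x.
Proof.
move=> xA; have -> : \row_(i < #|A|) (enum_val i == x)%:R =
    delta_mx 0 (enum_rank_in xA x) :> 'rV[F]_#|A|.
  apply/rowP => i; rewrite !mxE eqxx /=; congr (_%:R).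
  by rewrite -{1}(enum_rankK_in xA xA) (inj_eq enum_val_inj).
by rewrite -rowE rowK enum_rankK_in.
Qed.

Definition encodable (A : {set {set 'I_K}}) (L : nat) : Prop :=
  exists (E : ({set 'I_K} -> 'M[F]_(N, m)) -> 'M[F]_(L, m))
         (C : {set 'I_K} -> 'rV[F]_L),
    forall W, {in A, forall S, coded_msg D W S = C S *m E W}.

Lemma encodable_set0 (A : {set {set 'I_K}}) :
  (forall S, S \in A -> S = set0) -> encodable A 0.
Proof.
move=> A0; exists (fun=> 0), (fun=> 0) => W S /A0 ->.
by rewrite /coded_msg big_set0 mul0mx.
Qed.

Section Step.
Variables (n : nat) (hn : (n < K)%N) (s : nat).
Let k0 := Ordinal hn.

Lemma encodable_step L0 L1 :
  encodable (ksubsets (lower n) s.+1) L0 ->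
  (forall E0 C0,
     (forall W, {in ksubsets (lower n) s.+1, forall S, coded_msg D W S = C0 S *m E0 W}) ->
    exists (E1 : ({set 'I_K} -> 'M[F]_(N, m)) -> 'M[F]_(L1, m))
           (C1 : {set 'I_K} -> 'rV[F]_(L0 + L1)),
      forall W, {in ksubsets (lower n) s, forall P,
        coded_msg D W (k0 |: P) = C1 P *m col_mx (E0 W) (E1 W)}) ->
  encodable (ksubsets (lower n.+1) s.+1) (L0 + L1).
Proof.
move=> [E0 [C0 H0]] /(_ E0 C0 H0) [E1 [C1 H1]].
exists (fun W => col_mx (E0 W) (E1 W)).
exists (fun S : {set 'I_K} => if k0 \in S then C1 (S :\ k0) else row_mx (C0 S) 0) => W S.
rewrite (lowerS hn) => /(ksubsets_setU1 (notin_lower k0)); case: ifP => k0S SA.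
  by rewrite -H1 // setD1K.
by rewrite mul_row_col mul0mx addr0 H0.
Qed.

Lemma encodable_indep L0 :
  encodable (ksubsets (lower n) s.+1) L0 ->
  encodable (ksubsets (lower n.+1) s.+1) (L0 + 'C(n, s)).
Proof.
move=> enc0; rewrite -{2}(card_lower (ltnW hn)) -card_ksubsets.
apply: encodable_step enc0 _ => E0 C0 _.
exists (fun W => \matrix_i coded_msg D W (k0 |: enum_val i)).
exists (fun P => row_mx 0 (\row_i (enum_val i == P)%:R)) => W P PA.
by rewrite mul_row_col mul0mx add0r (enum_row_select (fun P => coded_msg D W (k0 |: P))).
Qed.

Lemma encodable_dep L0 L1 :
  (row k0 D <= prefix_mx D n)%MS ->
  encodable (ksubsets (lower n) s.+1) L0 ->
  encodable (ksubsets (lower n) s) L1 ->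
  encodable (ksubsets (lower n.+1) s.+1) (L0 + L1).
Proof.
case/submxP => a row_k0a enc0 [E1 [C1 H1]].
pose c (i : 'I_K) := if (i < n)%N then a 0 i else 0.
have row_k0 : row k0 D = \sum_i c i *: row i D.
  rewrite row_k0a mulmx_sum_row; apply: eq_bigr => i _.
  by rewrite row_prefix_mx /c; case: ifP; rewrite ?scaler0 ?scale0r.
apply: encodable_step enc0 _ => E0 C0 H0.
exists (fun W => E1 (dep_family k0 c W)).
exists (fun P : {set 'I_K} => row_mx ((-1) ^+ #|P| *:
  \sum_(j | j \notin P) ((-1) ^+ nbelow j P * c j) *: C0 (j |: P)) (C1 P)) => W P PA.
have Plow : P \subset lower k0 by move: PA; rewrite inE => /andP[].
rewrite mul_row_col -H1 // (coded_msg_dep row_k0) //; congr (_ + _).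
rewrite -scalemxAl mulmx_suml; congr (_ *: _); apply: eq_bigr => j jP.
rewrite -scalemxAl /c; case: ifP => jn; last by rewrite mulr0 !scale0r.
by rewrite H0 // ksubsetsU1 // inE.
Qed.

End Step.

Lemma encodable_prefix n : (n <= K)%N -> forall s,
  encodable (ksubsets (lower n) s) (nload n (\rank (prefix_mx D n)) s).
Proof.
elim: n => [_ s|n IHn hn [|s]].
- rewrite /nload sub0n subnn; apply: encodable_set0 => S.
  by rewrite inE lower0 subset0 => /andP[/eqP].
- rewrite /nload !bin0 subnn; apply: encodable_set0 => S.
  by rewrite inE => /andP[_ /eqP/cards0_eq].
have rn := mxrank_prefix_le D (ltnW hn); have IH := IHn (ltnW hn).
rewrite (mxrank_prefixS D hn); case: (boolP (row _ D <= _)%MS) => [dep|indep].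
  by rewrite addn0 -nloadS_dep //; apply: encodable_dep dep (IH _) (IH _).
by rewrite addnS addn0 -nloadS_indep //; apply: encodable_indep.
Qed.

End Encoding.

(* The symbols of a file are labelled by (T, i) with T a t-subset of users and
   i < m; user k caches the symbols whose label contains k. *)
Definition tsubset (K t : nat) := {T : {set 'I_K} | #|T| == t}.

Lemma bin_diff_mul n t : 0 < n -> ('C(n, t) - 'C(n.-1, t)) * n = t * 'C(n, t).
Proof.
case: n => // n _; case: t => [|t]; first by rewrite !bin0 subnn.
by rewrite {1}binS addKn mulnC -mul_bin_diag.
Qed.

Section CountTsubsets.
Variables (K t : nat).

Lemma card_tsubset_pred (P : pred {set 'I_K}) :
  #|[set T : tsubset K t | P (val T)]| = #|[set S : {set 'I_K} | #|S| == t & P S]|.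
Proof.
rewrite -(card_imset _ val_inj); apply: eq_card => S; rewrite inE.
apply/imsetP/andP => [[T + ->] | [St PS]].
  by rewrite inE => PT; split => //; exact: (valP T).
by exists (exist _ S St); rewrite ?inE.
Qed.

Lemma card_tsubset : #|{: tsubset K t}| = 'C(K, t).
Proof.
rewrite card_sig -[K in 'C(K, t)]card_ord -card_draws.
by apply: eq_card => T; rewrite !inE.
Qed.

Lemma card_tsubset_mem (k : 'I_K) :
  #|[set T : tsubset K t | k \in val T]| * K = t * 'C(K, t).
Proof.
have K_gt0 : 0 < K by case: K k => [[]|].
have total : #|[set T : tsubset K t | k \in val T]| +
    #|[set T : tsubset K t | k \notin val T]| = 'C(K, t).
  rewrite -card_tsubset -(cardsC [set T : tsubset K t | k \in val T]).
  by congr (_ + _); apply: eq_card => T; rewrite !inE.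
rewrite (card_tsubset_pred (fun S => k \notin S)) in total.
rewrite (_ : [set S | _ & _] = ksubsets [set~ k] t) in total; last first.
  by apply/setP => S; rewrite !inE subsetC sub1set inE andbC.
rewrite card_ksubsets cardsC1 card_ord in total.
by rewrite -bin_diff_mul // -total addnK.
Qed.

End CountTsubsets.

Section Placement.
Variables (F : finFieldType) (K N t m B : nat).
Hypothesis card_symbols : #|{: tsubset K t * 'I_m}| = B.
Local Open Scope ring_scope.

Definition symbol_of (b : 'I_B) : tsubset K t * 'I_m :=
  enum_val (cast_ord (esym card_symbols) b).
Definition index_of (x : tsubset K t * 'I_m) : 'I_B :=
  cast_ord card_symbols (enum_rank x).

Lemma symbol_ofK : cancel symbol_of index_of.
Proof. by move=> b; rewrite /symbol_of /index_of enum_valK cast_ordKV. Qed.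

Lemma index_ofK : cancel index_of symbol_of.
Proof. by move=> x; rewrite /symbol_of /index_of cast_ordK enum_rankK. Qed.

Definition placement (k : 'I_K) : {set 'I_N * 'I_B} :=
  [set p | k \in val (symbol_of p.2).1].

(* The value 0 for [#|T| != t] is a junk value that is never used. *)
Definition subfile (f : 'I_N -> 'I_B -> F) (T : {set 'I_K}) : 'M[F]_(N, m) :=
  \matrix_(n, i) if insub T is Some T' then f n (index_of (T', i)) else 0.

Lemma subfile_cache k (W : 'M[F]_(N, B)) (T : {set 'I_K}) : k \in T ->
  subfile (fun n b => cache (placement k) W (n, b)) T = subfile W T.
Proof.
move=> kT; apply/matrixP => n i; rewrite !mxE.
by case: insubP => [T' _ eT|//]; rewrite ffunE inE index_ofK /= eT kT.
Qed.

Lemma mul_subfile (y : 'rV[F]_N) (W : 'M[F]_(N, B)) x :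
  (y *m W) 0 (index_of x) = (y *m subfile W (val x.1)) 0 x.2.
Proof. by rewrite !mxE; apply: eq_bigr => n _; rewrite !mxE valK; case: x. Qed.

(* A user k outside T reads y_k W_T off the message of k |: T, in which every
   other term involves a subfile W_(k |: T \ j) that k caches. *)
Definition decoder (D : 'M[F]_(K, N)) L (C : {set 'I_K} -> 'rV[F]_L) (k : 'I_K)
    (c : {ffun 'I_N * 'I_B -> F}) (X : 'rV[F]_(L * m)) : 'rV[F]_B :=
  let Z := subfile (fun n b => c (n, b)) in
  \row_b let: (T, i) := symbol_of b in
    if k \in val T then (row k D *m Z (val T)) 0 i
    else (-1) ^+ nbelow k (val T) * ((C (k |: val T) *m vec_mx X) 0 i -
       \sum_(j in val T) (-1) ^+ nbelow j (k |: val T) *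
         (row j D *m Z (k |: (val T :\ j))) 0 i).

Lemma delivery_of_encodable (D : 'M[F]_(K, N)) L :
  encodable m D (ksubsets (lower K) t.+1) L -> delivery placement D (L * m)%N.
Proof.
move=> [E [C H]]; exists (fun W => mxvec (E (subfile W))), (decoder D C) => W k.
apply/rowP => b; rewrite -[b]symbol_ofK mul_subfile mxE index_ofK.
case: (symbol_of b) => T i /=; case: ifP => kT; first by rewrite subfile_cache.
have kTS : k |: val T \in ksubsets (lower K) t.+1.
  rewrite ksubsetsU1 ?kT ?inE ?ltn_ord //= (valP T) andbT.
  by apply/subsetP => x _; rewrite inE.
rewrite (mxvecK (E (subfile W))) -H // (coded_msg_setU1 D _ (negbT kT)) mxE summxE.
under [X in _ * (_ - X)]eq_bigr => j jT do rewrite subfile_cache ?setU11 //.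
under [X in _ * (_ + X - _)]eq_bigr => j jT do rewrite mxE.
by rewrite addrK mxE mulrA signrK mul1r.
Qed.

Lemma card_placement k : (#|placement k| * K = N * t * B)%N.
Proof.
have -> : placement k =
    setX [set: 'I_N] (index_of @: [set x : tsubset K t * 'I_m | k \in val x.1]).
  apply/setP => -[n b]; rewrite !inE /=; apply/idP/imsetP => [kb|[x kx ->]].
    by exists (symbol_of b); rewrite ?inE ?symbol_ofK.
  by rewrite index_ofK; move: kx; rewrite inE.
rewrite cardsX cardsT card_ord card_imset; last exact: can_inj index_ofK.
have -> : [set x : tsubset K t * 'I_m | k \in val x.1] =
    setX [set T : tsubset K t | k \in val T] [set: 'I_m].
  by apply/setP => -[T i]; rewrite !inE andbT.
rewrite cardsX cardsT card_ord -card_symbols card_prod card_tsubset card_ord.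
by rewrite -mulnA mulnAC card_tsubset_mem -mulnA mulnA.
Qed.

End Placement.

Lemma bigmax_nload (F : finFieldType) K N t m :
  \max_(D : 'M[F]_(K, N)) (nload K (\rank D) t * m) = nload K (minn K N) t * m.
Proof.
apply/eqP; rewrite eqn_leq; apply/andP; split.
  apply/bigmax_leqP => D _; rewrite leq_mul2r leq_nload ?orbT //.
  by rewrite leq_min rank_leq_row rank_leq_col.
apply: leq_trans (leq_bigmax (pid_mx (minn K N) : 'M[F]_(K, N))).
by rewrite rank_pid_mx ?geq_minl ?geq_minr.
Qed.

Theorem theorem1 (F : finFieldType) (K N t B : nat) :
  0 < K -> 0 < N -> t <= K -> 'C(K, t) %| B ->
  exists S : 'I_K -> {set 'I_N * 'I_B},
    (forall k, #|S k| * K = N * t * B) /\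
    exists Lf : 'M[F]_(K, N) -> nat,
      (forall D : 'M[F]_(K, N),
          delivery S D (Lf D) /\
          Lf D * 'C(K, t) = ('C(K, t.+1) - 'C(K - \rank D, t.+1)) * B) /\
      (\max_(D : 'M[F]_(K, N)) Lf D) * 'C(K, t)
        = ('C(K, t.+1) - 'C(K - minn K N, t.+1)) * B /\
      (forall D : 'M[F]_(K, N), \rank D = minn K N ->
          Lf D = \max_(D' : 'M[F]_(K, N)) Lf D').
Proof.
move=> _ _ _ /dvdnP[m ->].
have card_symbols : #|{: tsubset K t * 'I_m}| = m * 'C(K, t).
  by rewrite card_prod card_tsubset card_ord mulnC.
exists (placement N card_symbols); split; first exact: card_placement.
exists (fun D => nload K (\rank D) t.+1 * m); rewrite bigmax_nload.
split; [move=> D; split | split; last by move=> D ->].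
- apply: delivery_of_encodable.
  by have := encodable_prefix m D (leqnn K) t.+1; rewrite prefix_mxK.
- by rewrite mulnA.
- by rewrite mulnA.
Qed.
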